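(* Let $m\ge3$ and $h\ge1$ be integers and set $n'=2^{2m+h-3}-2^{2m-3}-2^{m-1}$. Let $\mathbf{C}_0$ be a projective binary linear $[2^{2m-3}+2^{m-2}-1,\ 2m-2]$ code whose set of nonzero weights is $\{2^{2m-4},\,2^{2m-4}+2^{m-2}\}$, and let $\mathbf{C}_1$ be its simplex complementary code of dimension $2m+h-2$, a $[2^{2m+h-2}-2^{2m-3}-2^{m-2},\ 2m+h-2,\ 2^{2m+h-3}-2^{2m-4}-2^{m-2}]_2$ code with maximum weight $2^{2m+h-3}$. Then the code $\mathbf{C}'$ obtained from $\mathbf{C}_1$ by the extension construction is a minimal binary linear $[2^{2m+h-2}-2^{2m-3}-2^{m-2}+n',\ 2m+h-2,\ 2^{2m+h-3}-2^{2m-4}-2^{m-2}]_2$ code with maximum weight $2^{2m+h-2}-2^{2m-3}-2^{m-1}$, and it violates the Ashikhmin–Barg condition.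
   Context: Projective code: columns of a generator matrix are nonzero and pairwise distinct (binary case). Simplex complementary code of dimension $K=k+h$ of a projective binary $[n,k]$ code: append $h$ zeros to the columns of a generator matrix and take the code generated by the matrix whose columns are all nonzero vectors of $\mathbf{F}_2^K$ other than these $n$. Extension construction for a binary $[N,K]$ code $\mathbf{D}$, $K\ge2$, with minimum nonzero weight $w_{min}$, maximum weight $w_{max}$ and $n'=2w_{min}-w_{max}\ge1$: choose a basis $\mathbf{r}_1,\dots,\mathbf{r}_K$ with $wt(\mathbf{r}_1)=w_{max}$, $wt(\mathbf{r}_2)=w_{min}$; the extended code is generated by $(\mathbf{1},\mathbf{r}_1),(\mathbf{0},\mathbf{r}_2),\dots,(\mathbf{0},\mathbf{r}_K)$ in $\mathbf{F}_2^{n'+N}$. Minimal code: nonzero codewords with nested supports are equal. Ashikhmin–Barg condition (binary): $w_{min}/w_{max}>1/2$. *)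

From HB Require Import structures.
From mathcomp Require Import all_boot all_order all_algebra.
Set Implicit Arguments. Unset Strict Implicit. Unset Printing Implicit Defensive.
Import Order.TTheory GRing.Theory Num.Theory.
Local Open Scope ring_scope.

Definition code (k n : nat) (G : 'M['F_2]_(k, n)) : {set 'rV['F_2]_n} :=
  [set u *m G | u : 'rV['F_2]_k].

Definition supp (n : nat) (v : 'rV['F_2]_n) : {set 'I_n} := [set j | v 0 j != 0].
Definition wt (n : nat) (v : 'rV['F_2]_n) : nat := #|supp v|.

Definition wmax (k n : nat) (G : 'M['F_2]_(k, n)) : nat :=
  \max_(c in code G) wt c.
Definition wmin (k n : nat) (G : 'M['F_2]_(k, n)) : nat :=
  \big[minn/n]_(c in code G :\ 0) wt c.

Definition has_nz_weight (k n : nat) (G : 'M['F_2]_(k, n)) (w : nat) : Prop :=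
  exists2 c, c \in code G :\ 0 & wt c = w.

Definition projective (k n : nat) (G : 'M['F_2]_(k, n)) : Prop :=
  (forall j, col j G != 0) /\ injective (fun j => col j G).

Definition minimal_code (k n : nat) (G : 'M['F_2]_(k, n)) : Prop :=
  forall c c', c \in code G :\ 0 -> c' \in code G :\ 0 ->
    supp c \subset supp c' -> c = c'.

Definition AB_condition (k n : nat) (G : 'M['F_2]_(k, n)) : Prop :=
  (1 / 2 : rat) < (wmin G)%:R / (wmax G)%:R.

(* Simplex complementary code of dimension k+h: columns are all nonzero
   vectors of F_2^(k+h) except the columns of G padded with h zeros
   (columns listed in the canonical enumeration order). *)
Definition simplex_cols (k n h : nat) (G : 'M['F_2]_(k, n)) : {set 'cV['F_2]_(k + h)} :=
  [set v | (v != 0) && (v \notin [set col_mx (col j G) (0 : 'cV['F_2]_h) | j : 'I_n])].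

Definition simplex_comp (k n h : nat) (G : 'M['F_2]_(k, n))
  : 'M['F_2]_(k + h, #|simplex_cols h G|%N) :=
  \matrix_(i, j) (enum_val (A := mem (simplex_cols h G)) j : 'cV['F_2]_(k + h)) i 0.

(* Extension construction: R's rows r_1..r_K; the extended generator matrix
   has rows (1, r_1), (0, r_2), ..., (0, r_K) in F_2^(n' + N). *)
Definition ext_mx (n' K N : nat) (R : 'M['F_2]_(K, N)) : 'M['F_2]_(K, n' + N) :=
  row_mx (\matrix_(i, j) (if (i : nat) == 0 then 1 else 0)) R.

(* R's rows form a basis r_1, ..., r_K of the code generated by G with
   wt(r_1) = wmax and wt(r_2) = wmin (indices 0 and 1 here). *)
Definition ext_basis (K N : nat) (G R : 'M['F_2]_(K, N)) : Prop :=
  [/\ (R == G)%MS, row_free R,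
      (forall i : 'I_K, (i : nat) = 0 -> wt (row i R) = wmax G) &
      (forall i : 'I_K, (i : nat) = 1 -> wt (row i R) = wmin G)].

Definition ext_len (K N : nat) (G : 'M['F_2]_(K, N)) : nat := 2 * wmin G - wmax G.

(* Let K = k + h.  A nonzero u in F_2^K has (u *m v) = 1 for exactly half of the
   v in F_2^K, and the columns missing from the simplex complement G_1 of a
   projective G_0 are the padded columns of G_0; hence u G_1 has weight
   2^(K-1) - wt (x G_0), where x is the first k coordinates of u.  So
   wmax G_1 = 2^(K-1) and wmin G_1 = 2^(K-1) - wmax G_0.  Prepending
   n' = 2 wmin - wmax copies of the first coordinate keeps the minimum weight and
   raises the maximum weight to exactly 2 wmin, so wmin / wmax = 1/2.  The extended
   code is still minimal: nested supports in it give nested supports in G_1, and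
   G_1 is minimal because wmax G_1 < 2 wmin G_1, i.e. n' >= 1. *)

From HB Require Import structures.
From mathcomp Require Import all_boot all_order all_algebra.
From mathcomp Require Import zify.
Set Implicit Arguments. Unset Strict Implicit. Unset Printing Implicit Defensive.
Import Order.TTheory GRing.Theory Num.Theory.
Local Open Scope ring_scope.

Lemma F2_cases (x : 'F_2) : x = 0 \/ x = 1.
Proof. by case: x => [[|[|]]] // ?; [left | right]; apply/val_inj. Qed.

Lemma wtE n (v : 'rV['F_2]_n) : wt v = (\sum_j (v 0 j != 0)%R)%N.
Proof. by rewrite /wt /supp -sum1_card big_mkcond; apply: eq_bigr => j _; rewrite inE. Qed.

Lemma wt0 n : wt (0 : 'rV['F_2]_n) = 0%N.
Proof. by rewrite wtE big1 // => j _; rewrite mxE eqxx. Qed.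

Lemma wt_eq0 n (v : 'rV['F_2]_n) : (wt v == 0%N) = (v == 0).
Proof.
rewrite cards_eq0; apply/eqP/eqP => [supp0 | ->]; last by apply/setP => j; rewrite !inE mxE eqxx.
by apply/rowP => j; have /setP/(_ j) := supp0; rewrite !inE mxE => /negbFE/eqP.
Qed.

Lemma wt_row_mx n1 n2 (x : 'rV['F_2]_n1) (y : 'rV['F_2]_n2) :
  wt (row_mx x y) = (wt x + wt y)%N.
Proof.
rewrite !wtE big_split_ord /=.
by congr (_ + _)%N; apply: eq_bigr => j _; rewrite (row_mxEl, row_mxEr).
Qed.

Lemma wt_const_mx n (x : 'F_2) : wt (const_mx x : 'rV_n) = ((x != 0)%R * n)%N.
Proof.
rewrite wtE (eq_bigr (fun=> nat_of_bool (x != 0))) => [|j _]; last by rewrite mxE.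
by rewrite sum_nat_const card_ord mulnC.
Qed.

Lemma wt_subset_supp n (a b : 'rV['F_2]_n) :
  supp a \subset supp b -> wt b = (wt a + wt (b - a))%N.
Proof.
move=> /subsetP sab; rewrite !wtE -big_split /=; apply: eq_bigr => j _.
have := sab j; rewrite !inE !mxE.
case: (F2_cases (a 0 j)) => ->; case: (F2_cases (b 0 j)) => ->;
  by rewrite ?subr0 ?subrr ?sub0r ?oppr_eq0 ?oner_eq0 ?eqxx //= => /(_ isT).
Qed.

Lemma subset_supp_rsubmx n1 n2 (a b : 'rV['F_2]_(n1 + n2)) :
  supp a \subset supp b -> supp (rsubmx a) \subset supp (rsubmx b).
Proof.
by move=> /subsetP sab; apply/subsetP => j; have := sab (rshift n1 j); rewrite !inE !mxE.
Qed.

Lemma geq_bigmin_cond (I : finType) (P : pred I) (F : I -> nat) x i0 :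
  P i0 -> (\big[minn/x]_(i | P i) F i <= F i0)%N.
Proof.
rewrite unlock => Pi0; have: i0 \in index_enum I := mem_index_enum i0.
elim: index_enum => //= i s IHs; rewrite inE => /predU1P [<- | /IHs le_i0].
  by rewrite Pi0 geq_minl.
by case: ifP => // _; rewrite geq_min le_i0 orbT.
Qed.

Section Code.
Variables (k n : nat) (G : 'M['F_2]_(k, n)).

Lemma codeP c : reflect (exists u, c = u *m G) (c \in code G).
Proof. by apply: (iffP imsetP) => [[u _ ->] | [u ->]]; exists u. Qed.

Lemma mem_code u : u *m G \in code G.
Proof. exact: imset_f. Qed.

Lemma code_sub c c' : c \in code G -> c' \in code G -> c' - c \in code G.
Proof. by move=> /codeP [u ->] /codeP [v ->]; rewrite -mulmxBl mem_code. Qed.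

Lemma wmax_witness : exists2 c, c \in code G & wt c = wmax G.
Proof.
have [|c Gc wc] := eq_bigmax_cond (@wt n) (A := [pred c in code G]).
  by apply/card_gt0P; exists 0; rewrite inE -(mul0mx 1 G) mem_code.
by exists c.
Qed.

Lemma wt_le_wmax c : c \in code G -> (wt c <= wmax G)%N.
Proof. exact: leq_bigmax_cond. Qed.

Lemma wmax_eq w :
  (forall c, c \in code G -> wt c <= w)%N -> (exists2 c, c \in code G & wt c = w) ->
  wmax G = w.
Proof.
move=> le_w [c Gc wc]; apply/eqP; rewrite eqn_leq -{2}wc wt_le_wmax // andbT.
exact/bigmax_leqP.
Qed.

Lemma wmin_le_wt c : c \in code G :\ 0 -> (wmin G <= wt c)%N.
Proof. exact: geq_bigmin_cond. Qed.

Lemma wmin_eq w :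
  (forall c, c \in code G :\ 0 -> (w <= wt c)%N) -> (exists2 c, c \in code G :\ 0 & wt c = w) ->
  wmin G = w.
Proof.
move=> ge_w [c Gc wc]; apply/eqP; rewrite eqn_leq -{1}wc wmin_le_wt //=.
apply: (big_ind (leq w)) => [|x y wx wy|]; last exact: ge_w.
  by rewrite -wc (leq_trans (max_card _)) ?card_ord.
by rewrite leq_min wx.
Qed.

Lemma wmax_has_nz_weight w :
  (forall w', has_nz_weight G w' -> w' <= w)%N -> has_nz_weight G w -> wmax G = w.
Proof.
move=> le_w [c /setD1P [_ Gc] wc]; apply: wmax_eq; last by exists c.
move=> d Gd; have [->|d0] := eqVneq d 0; first by rewrite wt0.
by apply: le_w; exists d; rewrite // !inE d0.
Qed.

Lemma minimal_code_wmax_lt : (wmax G < 2 * wmin G)%N -> minimal_code G.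
Proof.
move=> lt_max2min c c' Gc Gc' sub_cc'; apply/eqP/negPn/negP => neq_cc'.
have [[_ Gc0] [_ Gc'0]] := (setD1P Gc, setD1P Gc').
have Gd : c' - c \in code G :\ 0 by rewrite !inE subr_eq0 eq_sym neq_cc' code_sub.
have := wt_le_wmax Gc'0; rewrite (wt_subset_supp sub_cc').
(* The two occurrences of [c' - c] use different instance paths; [set] merges them for lia. *)
have := wmin_le_wt Gc; have := wmin_le_wt Gd; set d := c' - c; clearbody d; lia.
Qed.
End Code.

Lemma not_AB_condition k n (G : 'M['F_2]_(k, n)) :
  wmax G = (2 * wmin G)%N -> ~ AB_condition G.
Proof.
rewrite /AB_condition => ->; have [-> | w0] := eqVneq (wmin G) 0%N; first by rewrite mul0r.
by rewrite natrM invfM mulrCA divff ?pnatr_eq0 // mulr1 div1r ltxx.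
Qed.

Lemma card_mulmx_neq0 K (u : 'rV['F_2]_K) :
  u != 0 -> #|[set v : 'cV_K | (u *m v) 0 0 != 0]| = (2 ^ K.-1)%N.
Proof.
move=> u0; have /existsP [i ui] : [exists i, u 0 i != 0].
  by apply: contraR u0 => /existsPn u0; apply/eqP/rowP => j; rewrite mxE; apply/eqP/negPn.
set T := [set v | _]; pose v0 : 'cV['F_2]_K := delta_mx i 0.
have uv0 : (u *m v0) 0 0 = 1 by rewrite -colE mxE; case: (F2_cases (u 0 i)) ui => // ->.
have uDv0 v : (u *m (v + v0)) 0 0 = (u *m v) 0 0 + 1 by rewrite mulmxDr mxE uv0.
have uBv0 v : (u *m (v - v0)) 0 0 = (u *m v) 0 0 - 1.
  by rewrite mulmxBr -uv0 [LHS]mxE [X in _ + X]mxE.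
(* Translation by [v0] exchanges [T] and its complement. *)
have TC : ~: T = [set v + v0 | v in T].
  apply/setP => v; rewrite !inE negbK; apply/eqP/imsetP => [uv | [w]].
    by exists (v - v0); rewrite ?subrK // inE uBv0 uv sub0r oppr_eq0 oner_eq0.
  rewrite inE => uw ->; rewrite uDv0.
  by case: (F2_cases ((u *m w) 0 0)) uw => ->; rewrite ?eqxx // => _; apply/val_inj.
have cardV : #|'cV['F_2]_K| = (2 ^ K)%N by rewrite card_mx card_Fp // muln1.
have K_gt0 : (0 < K)%N := leq_ltn_trans (leq0n i) (ltn_ord i).
have := cardsC T; rewrite TC card_imset; last exact: addIr.
rewrite cardV -[X in (_ = 2 ^ X)%N -> _](prednK K_gt0) expnS addnn -mul2n.
by move=> /eqP; rewrite eqn_pmul2l // => /eqP.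
Qed.

Section SimplexComplement.
Variables (k n h : nat) (G : 'M['F_2]_(k, n)).

Lemma wt_mul_simplex_compE (u : 'rV_(k + h)) :
  wt (u *m simplex_comp h G) = #|[set v in simplex_cols h G | (u *m v) 0 0 != 0]|.
Proof.
rewrite wtE (eq_bigr (fun j => nat_of_bool ((u *m enum_val j) 0 0 != 0))) => [|j _].
  rewrite -(big_enum_val (fun v => nat_of_bool ((u *m v) 0 0 != 0))) -sum1_card.
  rewrite big_mkcond [RHS]big_mkcond /=.
  by apply: eq_bigr => v _; rewrite !inE; case: (_ && _); case: (_ != 0).
by congr (nat_of_bool (_ != _)); rewrite !mxE; apply: eq_bigr => i _; rewrite !mxE.
Qed.

Hypothesis G_proj : projective G.

Let pad (j : 'I_n) : 'cV['F_2]_(k + h) := col_mx (col j G) 0.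

Lemma pad_inj : injective pad.
Proof. by move=> i j /eq_col_mx [/(proj2 G_proj)]. Qed.

Lemma pad_neq0 j : pad j != 0.
Proof. by rewrite -col_mx0; apply: contra (proj1 G_proj j) => /eqP /eq_col_mx [->]. Qed.

Lemma card_simplex_cols : #|simplex_cols h G| = (2 ^ (k + h) - 1 - n)%N.
Proof.
have -> : simplex_cols h G = [set~ 0] :\: [set pad j | j : 'I_n].
  by apply/setP => v; rewrite !inE andbC.
have pad_nz : [set pad j | j : 'I_n] \subset [set~ 0].
  by apply/subsetP => _ /imsetP [j _ ->]; rewrite !inE pad_neq0.
rewrite cardsD (setIidPr pad_nz) cardsC1 card_imset ?card_ord; last exact: pad_inj.
by rewrite (card_mx 'F_2 (k + h) 1) card_Fp // muln1 subn1.
Qed.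

Lemma mulmx_pad (u : 'rV_(k + h)) j : (u *m pad j) 0 0 = (lsubmx u *m G) 0 j.
Proof.
rewrite -[u]hsubmxK mul_row_col mulmx0 addr0 row_mxKl !mxE.
by apply: eq_bigr => i _; rewrite !mxE.
Qed.

Lemma wt_mul_simplex_comp (u : 'rV_(k + h)) :
  u != 0 -> wt (u *m simplex_comp h G) = (2 ^ (k + h).-1 - wt (lsubmx u *m G))%N.
Proof.
move=> u0; pose T := [set v : 'cV_(k + h) | (u *m v) 0 0 != 0].
rewrite wt_mul_simplex_compE.
have -> : [set v in simplex_cols h G | (u *m v) 0 0 != 0] = T :\: [set pad j | j : 'I_n].
  apply/setP => v; rewrite !inE -andbA; case: eqP => [->|] //=.
  by rewrite mulmx0 mxE eqxx andbF.
rewrite cardsD.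
have -> : T :&: [set pad j | j : 'I_n] = pad @: supp (lsubmx u *m G).
  apply/setP => v; apply/setIP/imsetP => [[Tv /imsetP [j _ vj]] | [j]].
    by exists j; rewrite // inE -mulmx_pad -vj; rewrite inE in Tv.
  by rewrite inE -mulmx_pad => uj ->; split; [rewrite inE | exact: imset_f].
by rewrite card_imset ?card_mulmx_neq0 //; exact: pad_inj.
Qed.

Lemma wt_mul_simplex_comp_ge (u : 'rV_(k + h)) :
  u != 0 -> (2 ^ (k + h).-1 - wmax G <= wt (u *m simplex_comp h G))%N.
Proof. by move=> u0; rewrite wt_mul_simplex_comp // leq_sub2l // wt_le_wmax ?mem_code. Qed.

Lemma wmax_simplex_comp : (0 < h)%N -> wmax (simplex_comp h G) = (2 ^ (k + h).-1)%N.
Proof.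
move=> h_gt0; apply: wmax_eq => [_ /codeP [u ->] | ].
  have [->|u0] := eqVneq u 0; first by rewrite mul0mx wt0.
  by rewrite wt_mul_simplex_comp // leq_subr.
pose u : 'rV['F_2]_(k + h) := row_mx 0 (const_mx 1).
have u0 : u != 0.
  rewrite row_mx_eq0 negb_and; apply/orP; right.
  by apply/eqP => /rowP /(_ (Ordinal h_gt0)) /eqP; rewrite !mxE oner_eq0.
exists (u *m simplex_comp h G); first exact: mem_code.
by rewrite wt_mul_simplex_comp // row_mxKl mul0mx wt0 subn0.
Qed.

Lemma wmin_simplex_comp :
  (0 < wmax G < 2 ^ (k + h).-1)%N -> wmin (simplex_comp h G) = (2 ^ (k + h).-1 - wmax G)%N.
Proof.
move=> /andP [wmax_gt0 wmax_lt]; apply: wmin_eq => [c /setD1P [c0 /codeP [u cu]] | ].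
  by subst c; rewrite wt_mul_simplex_comp_ge //; apply: contraNneq c0 => u0; rewrite u0 mul0mx.
have [_ /codeP [x ->] wx] := wmax_witness G.
have x0 : x != 0 by apply: contraTneq wmax_gt0 => x0; rewrite -wx x0 mul0mx wt0.
have u0 : row_mx x 0 != 0 :> 'rV_(k + h) by rewrite row_mx_eq0 negb_and x0.
have wt_u : wt (row_mx x 0 *m simplex_comp h G) = (2 ^ (k + h).-1 - wmax G)%N.
  by rewrite wt_mul_simplex_comp // row_mxKl wx.
exists (row_mx x 0 *m simplex_comp h G) => //.
by rewrite !inE mem_code andbT -wt_eq0 wt_u subn_eq0 -ltnNge.
Qed.

Lemma rank_simplex_comp : (wmax G < 2 ^ (k + h).-1)%N -> \rank (simplex_comp h G) = (k + h)%N.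
Proof.
move=> wmax_lt; apply/eqP/inj_row_free => u uS0; apply/eqP/negPn/negP => u0.
by have := wt_mul_simplex_comp_ge u0; rewrite uS0 wt0 leqn0 subn_eq0 leqNgt wmax_lt.
Qed.
End SimplexComplement.

Section Extension.
Variables (K N : nat) (G R : 'M['F_2]_(K, N)).
Hypotheses (K_gt1 : (1 < K)%N) (R_basis : ext_basis G R).

Let i0 : 'I_K := Ordinal (ltnW K_gt1).
Let i1 : 'I_K := Ordinal K_gt1.
Let E := ext_mx (ext_len G) R.

Lemma mul_ext_mx (u : 'rV_K) : u *m E = row_mx (const_mx (u 0 i0)) (u *m R).
Proof.
rewrite mul_mx_row; congr row_mx; apply/rowP => j.
rewrite !mxE (bigD1 i0) //= mxE eqxx mulr1 big1 ?addr0 // => i /negPf i_neq0.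
by rewrite mxE -[(i : nat) == 0%N]/(i == i0) i_neq0 mulr0.
Qed.

Lemma wt_mul_ext_mx (u : 'rV_K) : wt (u *m E) = ((u 0 i0 != 0)%R * ext_len G + wt (u *m R))%N.
Proof. by rewrite mul_ext_mx wt_row_mx wt_const_mx. Qed.

Lemma mulmx_basis_code (u : 'rV_K) : u *m R \in code G.
Proof.
have [/andP [RG _] _ _ _] := R_basis.
by have /submxP [x ->] := submx_trans (submxMl u R) RG; rewrite mem_code.
Qed.

Lemma mulmx_basis_eq0 (u : 'rV_K) : (u *m R == 0) = (u == 0).
Proof. by have [_ R_free _ _] := R_basis; rewrite mulmx_free_eq0. Qed.

Lemma mul_ext_mx_eq0 (u : 'rV_K) : (u *m E == 0) = (u == 0).
Proof.
rewrite mul_ext_mx row_mx_eq0 mulmx_basis_eq0 andbC.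
by case: eqP => // ->; rewrite mxE; apply/eqP/rowP => j; rewrite !mxE.
Qed.

Lemma rank_ext_mx : \rank E = K.
Proof. by apply/eqP/inj_row_free => u /eqP; rewrite mul_ext_mx_eq0 => /eqP. Qed.

Lemma wmin_ext_mx : wmin E = wmin G.
Proof.
apply: wmin_eq => [c /setD1P [c0 /codeP [u cu]] | ].
  subst c; rewrite mul_ext_mx_eq0 in c0; rewrite wt_mul_ext_mx (leq_trans _ (leq_addl _ _)) //.
  by apply: wmin_le_wt; rewrite !inE mulmx_basis_eq0 c0 mulmx_basis_code.
have [_ _ _ wt_r1] := R_basis.
exists (delta_mx 0 i1 *m E); last by rewrite wt_mul_ext_mx mxE -rowE wt_r1.
rewrite !inE mul_ext_mx_eq0 mem_code andbT.
by apply/eqP => /rowP /(_ i1) /eqP; rewrite !mxE !eqxx oner_eq0.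
Qed.

Lemma wmax_ext_mx : (wmax G <= 2 * wmin G)%N -> wmax E = (2 * wmin G)%N.
Proof.
have [_ _ wt_r0 _] := R_basis => wmax_le.
apply: wmax_eq => [_ /codeP [u ->] | ].
  rewrite wt_mul_ext_mx; have := wt_le_wmax (mulmx_basis_code u).
  by rewrite /ext_len; case: (_ != 0) => /=; lia.
exists (delta_mx 0 i0 *m E); rewrite ?mem_code // wt_mul_ext_mx mxE -rowE wt_r0 //.
by rewrite !eqxx /ext_len /=; lia.
Qed.

Lemma minimal_ext_mx : (wmax G < 2 * wmin G)%N -> minimal_code E.
Proof.
move=> /minimal_code_wmax_lt G_min c c' /setD1P [c0 /codeP [u cu]] /setD1P [c'0 /codeP [v c'v]].
subst c c'; rewrite !mul_ext_mx_eq0 -!mulmx_basis_eq0 in c0 c'0.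
rewrite !mul_ext_mx => /subset_supp_rsubmx; rewrite !row_mxKr => /G_min.
rewrite !inE c0 c'0 !mulmx_basis_code => /(_ isT isT) /eqP.
by rewrite -subr_eq0 -mulmxBl mulmx_basis_eq0 subr_eq0 => /eqP ->.
Qed.

End Extension.

Local Close Scope ring_scope.

Lemma prop46_arith m h : 3 <= m -> 1 <= h ->
  let a := 2 ^ (m - 2) in let b := 2 ^ (2 * m - 4) in let c := 2 ^ (2 * m + h - 3) in
  [/\ 0 < b + a < c, c < 2 * (c - b - a),
      2 ^ (2 * m - 2 + h) - 1 - (2 ^ (2 * m - 3) + a - 1) = 2 ^ (2 * m + h - 2) - 2 ^ (2 * m - 3) - a,
      2 * (c - b - a) - c = c - 2 ^ (2 * m - 3) - 2 ^ (m - 1) &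
      2 * (c - b - a) = 2 ^ (2 * m + h - 2) - 2 ^ (2 * m - 3) - 2 ^ (m - 1)].
Proof.
move=> hm hh a b c.
have [-> -> -> ->] : [/\ 2 ^ (m - 1) = 2 * a, 2 ^ (2 * m - 3) = 2 * b,
                       2 ^ (2 * m + h - 2) = 2 * c & 2 ^ (2 * m - 2 + h) = 2 * c].
  by split; rewrite -expnS; congr (2 ^ _); lia.
have a_ge2 : 2 <= a by rewrite -{1}(expn1 2) leq_pexp2l //; lia.
have b_ge : 2 * a <= b by rewrite -expnS leq_pexp2l //; lia.
have c_ge : 4 * b <= c by rewrite (_ : 4 = 2 ^ 2) // -expnD leq_pexp2l //; lia.
by clearbody a b c; split; lia.
Qed.

Theorem proposition4p6 (m h : nat) (hm : 3 <= m) (hh : 1 <= h)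
  (G0 : 'M['F_2]_(2 * m - 2, 2 ^ (2 * m - 3) + 2 ^ (m - 2) - 1))
  (rkG0 : \rank G0 = 2 * m - 2)
  (projG0 : projective G0)
  (wtsG0 : forall w, has_nz_weight G0 w <->
             (w = 2 ^ (2 * m - 4) \/ w = 2 ^ (2 * m - 4) + 2 ^ (m - 2))) :
  let G1 := simplex_comp h G0 in
  let N := #|simplex_cols h G0| in
  let n' := 2 ^ (2 * m + h - 3) - 2 ^ (2 * m - 3) - 2 ^ (m - 1) in
  [/\ N = 2 ^ (2 * m + h - 2) - 2 ^ (2 * m - 3) - 2 ^ (m - 2),
      \rank G1 = 2 * m + h - 2,
      wmin G1 = 2 ^ (2 * m + h - 3) - 2 ^ (2 * m - 4) - 2 ^ (m - 2),
      wmax G1 = 2 ^ (2 * m + h - 3) &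
      forall R : 'M['F_2]_(2 * m - 2 + h, N), ext_basis G1 R ->
        let E := ext_mx (ext_len G1) R in
        [/\ ext_len G1 = n',
            ext_len G1 + N = 2 ^ (2 * m + h - 2) - 2 ^ (2 * m - 3) - 2 ^ (m - 2) + n',
            \rank E = 2 * m + h - 2 &
          [/\ minimal_code E,
            wmin E = 2 ^ (2 * m + h - 3) - 2 ^ (2 * m - 4) - 2 ^ (m - 2),
            wmax E = 2 ^ (2 * m + h - 2) - 2 ^ (2 * m - 3) - 2 ^ (m - 1) &
            ~ AB_condition E]]].
Proof.
move=> G1 N n'.
have K_pred : (2 * m - 2 + h).-1 = 2 * m + h - 3 by lia.
have K_eq : 2 * m - 2 + h = 2 * m + h - 2 by lia.
have K_gt1 : 1 < 2 * m - 2 + h by lia.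
have [wmax0_bounds wmax1_bound card_N_eq ext_len_eq wmaxE_eq] := prop46_arith hm hh.
have wmax0 : wmax G0 = 2 ^ (2 * m - 4) + 2 ^ (m - 2).
  apply: wmax_has_nz_weight => [w /wtsG0 [] -> // | ]; first exact: leq_addr.
  by apply/wtsG0; right.
have wmax0_lt : 0 < wmax G0 < 2 ^ (2 * m - 2 + h).-1 by rewrite wmax0 K_pred.
have wmax1 : wmax G1 = 2 ^ (2 * m + h - 3) by rewrite wmax_simplex_comp ?K_pred.
have wmin1 : wmin G1 = 2 ^ (2 * m + h - 3) - 2 ^ (2 * m - 4) - 2 ^ (m - 2).
  by rewrite wmin_simplex_comp // wmax0 K_pred subnDA.
have wmax1_lt : wmax G1 < 2 * wmin G1 by rewrite wmax1 wmin1.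
have card_N : N = 2 ^ (2 * m + h - 2) - 2 ^ (2 * m - 3) - 2 ^ (m - 2).
  by rewrite /N card_simplex_cols // card_N_eq.
split => //; first by rewrite -K_eq rank_simplex_comp //; case/andP: wmax0_lt.
move=> R R_basis E.
have ext_len1 : ext_len G1 = n' by rewrite /ext_len wmin1 wmax1 ext_len_eq.
split => //; first by rewrite ext_len1 card_N addnC.
  by rewrite -K_eq rank_ext_mx.
split; first exact: minimal_ext_mx.
- by rewrite wmin_ext_mx.
- by rewrite wmax_ext_mx ?(ltnW wmax1_lt) // wmin1 wmaxE_eq.
by apply: not_AB_condition; rewrite wmax_ext_mx ?wmin_ext_mx // ltnW.
Qed.
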